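(* Let $x,y$ be real (or complex) numbers with $x\neq 0$, $y\neq 0$ and $x+y\neq 0$. Then for every nonnegative integer $n$, $$\sum_{k=0}^{n}\binom{n}{k}^{-1}x^ky^{n-k}=x^n+\left(\frac{xy}{x+y}\right)^n(n+1)\sum_{j=0}^{n-1}\frac{\big((j+1)y^{j+2}+y\,x^{j+1}\big)(x+y)^j}{(xy)^{j+1}(j+1)(j+2)}.$$ *)

From mathcomp Require Import all_boot all_order all_algebra.

From mathcomp Require Import all_boot all_order all_algebra.
From mathcomp Require Import ring.
Import GRing.Theory Num.Theory.
Local Open Scope ring_scope.

(* Write S n for the left-hand side. The reciprocal Pascal rule
     1/C(n+1,k) + 1/C(n+1,k+1) = (n+2)/(n+1) * 1/C(n,k)
   gives the first-order recurrence
     (x + y) S (n+1) = x^(n+2) + y^(n+2) + x y (n+2)/(n+1) S n.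
   With c = x y / (x + y) and u n = (S n - x^n) / (c^n (n+1)), this says exactly
   that u (n+1) - u n is the n-th summand on the right, so u n is the sum of the
   first n summands. *)

Section ReciprocalBinomial.

Context {R : numFieldType}.

Lemma natr_inv_cross {a b c d : nat} :
  (0 < a * b)%N -> (a * b = c * d)%N -> d%:R^-1 = c%:R / a%:R * b%:R^-1 :> R.
Proof.
move=> ab_gt0 abE.
have c_neq0 : c%:R != 0 :> R.
  by rewrite pnatr_eq0; apply: contraTneq ab_gt0 => c0; rewrite abE c0.
by rewrite -mulrA -invfM -natrM abE natrM invfM mulrA mulfV ?mul1r.
Qed.

Lemma bin_inv_pascal {n k : nat} : (k <= n)%N ->
  ('C(n.+1, k))%:R^-1 + ('C(n.+1, k.+1))%:R^-1
  = (n.+2)%:R / (n.+1)%:R * ('C(n, k))%:R^-1 :> R.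
Proof.
move=> le_kn.
have Cnk_gt0 : (0 < n.+1 * 'C(n, k))%N by rewrite muln_gt0 bin_gt0.
rewrite (natr_inv_cross Cnk_gt0 (mul_bin_down n.+1 k)).
rewrite (natr_inv_cross Cnk_gt0 (mul_bin_diag n.+1 k)).
by rewrite -mulrDl -mulrDl -natrD subSn // addSn addnS subnK.
Qed.

Definition inv_binom_sum (x y : R) (n : nat) : R :=
  \sum_(0 <= k < n.+1) ('C(n, k))%:R^-1 * x ^+ k * y ^+ (n - k).

Lemma inv_binom_sum0 (x y : R) : inv_binom_sum x y 0 = 1.
Proof. by rewrite /inv_binom_sum big_nat1 bin0 invr1 !mul1r. Qed.

Lemma inv_binom_sumS (x y : R) (n : nat) :
  (x + y) * inv_binom_sum x y n.+1
  = x ^+ n.+2 + y ^+ n.+2 + x * y * ((n.+2)%:R / (n.+1)%:R) * inv_binom_sum x y n.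
Proof.
set Sl := \sum_(0 <= k < n.+1)
  ('C(n.+1, k))%:R^-1 * x ^+ k * y ^+ (n.+1 - k).
set Sr := \sum_(0 <= k < n.+1)
  ('C(n.+1, k.+1))%:R^-1 * x ^+ k.+1 * y ^+ (n.+1 - k.+1).
have split_top : inv_binom_sum x y n.+1 = Sl + x ^+ n.+1.
  by rewrite /inv_binom_sum big_nat_recr //= subnn binn invr1 mulr1 mul1r.
have split_bot : inv_binom_sum x y n.+1 = y ^+ n.+1 + Sr.
  by rewrite /inv_binom_sum big_nat_recl //= subn0 bin0 invr1 !mul1r.
have pascal : x * y * ((n.+2)%:R / (n.+1)%:R) * inv_binom_sum x y n = x * Sl + y * Sr.
  rewrite /inv_binom_sum !mulr_sumr -big_split /=.
  apply: eq_big_nat => k /andP[_]; rewrite ltnS => le_kn.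
  rewrite subSS subSn // !exprS.
  have -> : x * y * ((n.+2)%:R / (n.+1)%:R) * (('C(n, k))%:R^-1 * x ^+ k * y ^+ (n - k))
    = x * y * ((n.+2)%:R / (n.+1)%:R * ('C(n, k))%:R^-1) * x ^+ k * y ^+ (n - k) by ring.
  rewrite -(bin_inv_pascal le_kn); ring.
by rewrite pascal mulrDl {1}split_top split_bot !exprS; ring.
Qed.

End ReciprocalBinomial.

Theorem mainTheorem5 (R : numFieldType) (x y : R)
  (hx : x != 0) (hy : y != 0) (hxy : x + y != 0) (n : nat) :
  \sum_(0 <= k < n.+1) ('C(n, k))%:R^-1 * x ^+ k * y ^+ (n - k)
  = x ^+ n + (x * y / (x + y)) ^+ n * n.+1%:R *
    \sum_(0 <= j < n)
      (((j.+1)%:R * y ^+ j.+2 + y * x ^+ j.+1) * (x + y) ^+ j)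
      / ((x * y) ^+ j.+1 * (j.+1)%:R * (j.+2)%:R).
Proof.
rewrite -[LHS]/(inv_binom_sum x y n).
elim: n => [|n IH].
  by rewrite inv_binom_sum0 big_geq // !mulr0 addr0.
set F := \sum_(0 <= j < n) _ in IH.
rewrite big_nat_recr //= -/F.
apply: (mulfI hxy); rewrite inv_binom_sumS IH.
have n1_neq0 : 1 + n%:R != 0 :> R by rewrite addrC natr1 pnatr_eq0.
have n2_neq0 : 2 + n%:R != 0 :> R by rewrite addrC -natrD addn2 pnatr_eq0.
rewrite !expr_div_n !exprMn !exprS; field.
by rewrite n1_neq0 n2_neq0 !(expf_neq0 _ hx, expf_neq0 _ hy, expf_neq0 _ hxy) hx hy hxy.
Qed.
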